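(* Let $A\subseteq\mathbb{N}$ and $B,C\in\mathcal{D}$ with $A\cup B\supseteq C$. Then $d(C)-d(B)\le\underline{\underline{d}}(A)$.
   Context: $\mathbb{N}=\{1,2,3,\dots\}$. For $A\subseteq\mathbb{N}$ let $A(n)=|A\cap[1,n]|$. Let $\mathcal{D}$ be the collection of all $A\subseteq\mathbb{N}$ for which the asymptotic density $d(A)=\lim_{n\to\infty}\frac{A(n)}{n}$ exists. Define $\underline{\underline{d}}(A)=\sup\{d(B);\ B\subseteq A,\ B\in\mathcal{D}\}$. *)

From Stdlib Require Import Reals ClassicalEpsilon.
From Coquelicot Require Import Coquelicot.
Open Scope R_scope.

(* Subsets of N = {1,2,3,...} are predicates on nat; elements 0 are ignored
   by the counting function, which only counts k in [1, n]. *)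
Definition nset := nat -> Prop.

Definition ind (A : nset) (k : nat) : R :=
  if excluded_middle_informative (A k) then 1 else 0.

Fixpoint count (A : nset) (n : nat) : R :=
  match n with
  | O => 0
  | S m => count A m + ind A (S m)
  end.

Definition has_density (A : nset) (x : R) : Prop :=
  is_lim_seq (fun n => count A n / INR n) x.

Definition in_D (A : nset) : Prop := exists x, has_density A x.

(* d(A), meaningful when A ∈ 𝒟 *)
Definition dens (A : nset) : R := real (Lim_seq (fun n => count A n / INR n)).

Definition lowlow_d (A : nset) : Rbar :=
  Lub_Rbar (fun x => exists B : nset,
    (forall k, (1 <= k)%nat -> B k -> A k) /\ has_density B x).

(* Put D := C \ B, a subset of A, and beta := d(C) - d(B).  Since C is covered
   by D and B, on every interval (m, n] the set D gains at least
   beta (n - m) - o(n) elements.  The greedy subset of D that takes k whenever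
   this keeps its counting function at most beta k therefore never falls more
   than 1 + o(n) behind beta n: after its last refusal it takes all of D.  It
   has density beta, and it witnesses beta <= dd(A).  When beta <= 0 the same
   construction at rate 0 gives a subset of density 0. *)

From Pilot Require Import Defs.
From Stdlib Require Import Reals Lra Lia Arith Classical ClassicalEpsilon.
From Coquelicot Require Import Coquelicot.
Open Scope R_scope.

Lemma ind_bounds (X : nset) (k : nat) : 0 <= Defs.ind X k <= 1.
Proof. unfold Defs.ind; destruct excluded_middle_informative; lra. Qed.

Lemma count_bounds (X : nset) (n : nat) : 0 <= count X n <= INR n.
Proof.
  induction n as [|n IH]; cbn [count]; [rewrite INR_0; lra|].
  pose proof (ind_bounds X (S n)); rewrite S_INR; lra.
Qed.

Lemma count_le_count (X : nset) (m n : nat) : (m <= n)%nat -> count X m <= count X n.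
Proof.
  induction 1 as [|n _ IH]; cbn [count]; [lra|].
  pose proof (ind_bounds X (S n)); lra.
Qed.

Lemma count_diff_le_union (B C D : nset) (m n : nat) :
  (forall k, (1 <= k)%nat -> C k -> D k \/ B k) -> (m <= n)%nat ->
  count C n - count C m <= (count D n - count D m) + (count B n - count B m).
Proof.
  intros cover; induction 1 as [|n _ IH]; cbn [count]; [lra|].
  assert (Defs.ind C (S n) <= Defs.ind D (S n) + Defs.ind B (S n)).
  { specialize (cover (S n) ltac:(lia)); unfold Defs.ind.
    repeat destruct excluded_middle_informative; tauto || lra. }
  lra.
Qed.

Definition sublinear_error (X : nset) (x : R) : Prop :=
  forall e, 0 < e -> exists K, forall n,
    Rabs (count X n - x * INR n) <= e * INR n + K.

Lemma has_density_sublinear_error (X : nset) (x : R) :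
  has_density X x -> sublinear_error X x.
Proof.
  intros Hx e He; apply is_lim_seq_spec in Hx.
  destruct (Hx (mkposreal e He)) as [N HN]; simpl in HN.
  exists ((1 + Rabs x) * INR N); intros n.
  pose proof (pos_INR N); pose proof (pos_INR n); pose proof (Rabs_pos x).
  destruct (count_bounds X n).
  destruct (le_lt_dec N n) as [HNn|HnN].
  - destruct n as [|n]; [cbn [count]; rewrite INR_0, Rmult_0_r, Rminus_0_r, Rabs_R0; nra|].
    specialize (HN _ HNn).
    assert (Hpos : 0 < INR (S n)) by (apply lt_0_INR; lia).
    replace (count X (S n) - x * INR (S n))
      with ((count X (S n) / INR (S n) - x) * INR (S n)) by (field; lra).
    rewrite Rabs_mult, (Rabs_pos_eq (INR (S n))) by lra.
    pose proof (Rabs_pos (count X (S n) / INR (S n) - x)); nra.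
  - assert (INR n <= INR N) by (apply le_INR; lia).
    eapply Rle_trans; [apply Rabs_triang|].
    rewrite Rabs_Ropp, Rabs_mult, (Rabs_pos_eq (count X n)), (Rabs_pos_eq (INR n))
      by lra.
    nra.
Qed.

Lemma sublinear_error_has_density (X : nset) (x : R) :
  sublinear_error X x -> has_density X x.
Proof.
  intros Hx; apply is_lim_seq_spec; intros [eps Heps]; simpl.
  destruct (Hx (eps / 2) ltac:(lra)) as [K HK].
  assert (HK0 : 0 <= K).
  { specialize (HK 0%nat); cbn [count] in HK; rewrite INR_0 in HK.
    pose proof (Rabs_pos (0 - x * 0)); lra. }
  destruct (nfloor_ex (2 * K / eps)) as [N [_ HN]].
  { apply Rmult_le_pos; [lra|apply Rlt_le, Rinv_0_lt_compat; lra]. }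
  exists (S N); intros n Hn.
  assert (HNn : INR (S N) <= INR n) by (apply le_INR; lia).
  rewrite S_INR in HNn.
  assert (Hpos : 0 < INR n) by (pose proof (pos_INR N); lra).
  assert (Hbig : 2 * K < eps * INR n).
  { replace (2 * K) with (2 * K / eps * eps) by (field; lra); nra. }
  replace (count X n / INR n - x) with ((count X n - x * INR n) / INR n)
    by (field; lra).
  rewrite Rabs_div, (Rabs_pos_eq (INR n)) by lra.
  apply Rmult_lt_reg_r with (INR n); [lra|].
  unfold Rdiv; rewrite Rmult_assoc, Rinv_l, Rmult_1_r by lra.
  specialize (HK n); lra.
Qed.

Definition increments_at_least (D : nset) (beta : R) : Prop :=
  forall e, 0 < e -> exists K, forall m n, (m <= n)%nat ->
    beta * (INR n - INR m) - e * INR n - K <= count D n - count D m.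

Lemma increments_at_least_0 (D : nset) : increments_at_least D 0.
Proof.
  intros e He; exists 0; intros m n Hmn.
  pose proof (count_le_count D m n Hmn); pose proof (pos_INR n); nra.
Qed.

Lemma increments_at_least_diff (B C D : nset) (b c : R) :
  (forall k, (1 <= k)%nat -> C k -> D k \/ B k) ->
  has_density B b -> has_density C c -> increments_at_least D (c - b).
Proof.
  intros cover HB HC e He.
  destruct (has_density_sublinear_error C c HC (e / 4) ltac:(lra)) as [KC HKC].
  destruct (has_density_sublinear_error B b HB (e / 4) ltac:(lra)) as [KB HKB].
  exists (2 * KC + 2 * KB); intros m n Hmn.
  assert (INR m <= INR n) by (apply le_INR; exact Hmn).
  pose proof (count_diff_le_union B C D m n cover Hmn).
  pose proof (proj1 (Rabs_le_between _ _) (HKC m)).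
  pose proof (proj1 (Rabs_le_between _ _) (HKC n)).
  pose proof (proj1 (Rabs_le_between _ _) (HKB m)).
  pose proof (proj1 (Rabs_le_between _ _) (HKB n)).
  nra.
Qed.

Fixpoint greedy_count (D : nset) (beta : R) (n : nat) : R :=
  match n with
  | O => 0
  | S m => greedy_count D beta m +
      (if excluded_middle_informative
            (D (S m) /\ greedy_count D beta m + 1 <= beta * INR (S m))
       then 1 else 0)
  end.

Definition greedy (D : nset) (beta : R) (k : nat) : Prop :=
  D k /\ greedy_count D beta (pred k) + 1 <= beta * INR k.

Lemma count_greedy (D : nset) (beta : R) (n : nat) :
  count (greedy D beta) n = greedy_count D beta n.
Proof.
  induction n as [|n IH]; cbn [count greedy_count]; [reflexivity|].
  rewrite IH; unfold Defs.ind, greedy; cbn [pred].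
  repeat destruct excluded_middle_informative; tauto || lra.
Qed.

Lemma greedy_count_le (D : nset) (beta : R) (n : nat) :
  0 <= beta -> greedy_count D beta n <= beta * INR n.
Proof.
  intros Hbeta; induction n as [|n IH]; cbn [greedy_count]; [rewrite INR_0; lra|].
  rewrite S_INR in *.
  destruct excluded_middle_informative as [[_ Hle]|_]; nra.
Qed.

(* m is the last refusal of an element of D (or 0): from then on the greedy
   set takes every element of D. *)
Lemma greedy_count_last_refusal (D : nset) (beta : R) (n : nat) :
  exists m, (m <= n)%nat /\ beta * INR m - 1 <= greedy_count D beta m /\
    greedy_count D beta n - greedy_count D beta m = count D n - count D m.
Proof.
  induction n as [|n [m [Hmn [Hm Hdiff]]]].
  - exists 0%nat; cbn [count greedy_count]; rewrite INR_0; repeat split; lia || lra.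
  - cbn [count greedy_count]; unfold Defs.ind at 1.
    destruct (excluded_middle_informative (D (S n))) as [HD|HD].
    + destruct excluded_middle_informative as [_|Hrefused].
      * exists m; repeat split; lia || lra.
      * exists (S n); cbn [count greedy_count]; unfold Defs.ind.
        repeat destruct excluded_middle_informative; try tauto.
        repeat split; [lia| |lra].
        assert (~ greedy_count D beta n + 1 <= beta * INR (S n)) by tauto; lra.
    + destruct excluded_middle_informative as [[HD' _]|_]; [contradiction|].
      exists m; repeat split; lia || lra.
Qed.

Lemma greedy_has_density (D : nset) (beta : R) :
  0 <= beta -> increments_at_least D beta -> has_density (greedy D beta) beta.
Proof.
  intros Hbeta HD; apply sublinear_error_has_density; intros e He.
  destruct (HD e He) as [K HK].
  exists (K + 1); intros n; rewrite count_greedy.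
  destruct (greedy_count_last_refusal D beta n) as [m [Hmn [Hm Hdiff]]].
  pose proof (greedy_count_le D beta n Hbeta).
  pose proof (HK m n Hmn).
  apply Rabs_le; lra.
Qed.

Lemma dens_has_density (X : nset) (x : R) : has_density X x -> dens X = x.
Proof. intros Hx; unfold dens; now rewrite (is_lim_seq_unique _ _ Hx). Qed.

Lemma lowlow_d_ge_density (A X : nset) (x : R) :
  (forall k, (1 <= k)%nat -> X k -> A k) -> has_density X x ->
  Rbar_le (Finite x) (lowlow_d A).
Proof. intros HXA Hx; apply (proj1 (Lub_Rbar_correct _)); now exists X. Qed.

Lemma lowlow_d_ge_greedy (A D : nset) (beta : R) :
  (forall k, (1 <= k)%nat -> D k -> A k) -> 0 <= beta ->
  increments_at_least D beta -> Rbar_le (Finite beta) (lowlow_d A).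
Proof.
  intros HDA Hbeta HD.
  apply (lowlow_d_ge_density A (greedy D beta)).
  - intros k Hk [HDk _]; exact (HDA k Hk HDk).
  - exact (greedy_has_density D beta Hbeta HD).
Qed.

Theorem lemma3p10 (A B C : nset) :
  in_D B -> in_D C ->
  (forall k, (1 <= k)%nat -> C k -> A k \/ B k) ->
  Rbar_le (Finite (dens C - dens B)) (lowlow_d A).
Proof.
  intros [b HB] [c HC] cover.
  rewrite (dens_has_density B b HB), (dens_has_density C c HC).
  set (D := fun k => C k /\ ~ B k).
  assert (HDA : forall k, (1 <= k)%nat -> D k -> A k).
  { intros k Hk [HCk HBk]; destruct (cover k Hk HCk); tauto. }
  assert (HD : increments_at_least D (c - b)).
  { apply (increments_at_least_diff B C D); [|assumption..].
    intros k _ HCk; unfold D; destruct (classic (B k)); tauto. }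
  destruct (Rle_lt_dec (c - b) 0) as [Hle|Hlt].
  - apply Rbar_le_trans with (Finite 0); [simpl; lra|].
    exact (lowlow_d_ge_greedy A D 0 HDA (Rle_refl 0) (increments_at_least_0 D)).
  - exact (lowlow_d_ge_greedy A D (c - b) HDA (Rlt_le _ _ Hlt) HD).
Qed.
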